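(* Let $q$ be a prime power and let $\mathcal{F}\subseteq 2^{[n]}$ satisfy $|A\setminus B|\not\equiv 0\pmod q$ for all distinct $A,B\in\mathcal{F}$. Then $$|\mathcal{F}|\le\sum_{i=0}^{q-1}\binom{n-1}{i}.$$
   Context: $[n]=\{1,\ldots,n\}$ and $2^{[n]}$ is the family of all subsets of $[n]$. *)

From mathcomp Require Import all_boot.
Set Implicit Arguments. Unset Strict Implicit. Unset Printing Implicit Defensive.

Definition prime_power (q : nat) : Prop :=
  exists p k : nat, prime p /\ 0 < k /\ q = p ^ k.

From mathcomp Require Import all_boot all_algebra.
From mathcomp Require Import ring.

(* Fix a point x and let S range over the subsets of [n] \ {x} of size < q.
   Over F_p, take U(A, S) = (-1)^|S| [S ⊆ A \ {x}] and V(S, B) = [S ∩ B = ∅].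
   Then (U V)(A, B) = Σ_{k<q} (-1)^k C(t, k) = (-1)^(q-1) C(t-1, q-1) with
   t = |(A \ {x}) \ B|.  This is 1 for A = B, and it vanishes mod p when q
   does not divide t: from t C(t-1, q-1) = q C(t, q), a C(t-1, q-1) prime to p
   would force q | t.  If x ∉ A or x ∈ B then t = |A \ B|, so U V = 1 + N with
   N supported on the pairs where x ∈ A and x ∉ B; thus N² = 0, U V is
   invertible, and |F| = rank(U V) <= #{S} = Σ_{i<q} C(n-1, i). *)

Set Implicit Arguments.
Unset Strict Implicit.
Unset Printing Implicit Defensive.
Import GRing.Theory.
Local Open Scope ring_scope.

Lemma sum_alternating_binomial (R : comNzRingType) t m :
  \sum_(k < m.+1) (-1) ^+ k * 'C(t.+1, k)%:R = (-1) ^+ m * 'C(t, m)%:R :> R.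
Proof.
elim: m => [|m IHm]; first by rewrite big_ord1 !bin0 !expr0.
by rewrite big_ord_recr /= IHm binS natrD exprS; ring.
Qed.

Lemma prime_dvdn_bin_pred p e t :
  prime p -> ~~ (p ^ e %| t.+1)%N -> (p %| 'C(t, (p ^ e).-1))%N.
Proof.
move=> p_pr; apply: contraR => ndvd_p_bin.
have cop : coprime (p ^ e) 'C(t, (p ^ e).-1).
  by rewrite coprimeXl // prime_coprime.
have pe_gt0 : (0 < p ^ e)%N by rewrite expn_gt0 prime_gt0.
rewrite -(Gauss_dvdl _ cop) -[t]/(t.+1.-1) mul_bin_diag prednK //.
exact: dvdn_mulr.
Qed.

Lemma sum_alternating_binomial_pchar (R : comNzRingType) p e t :
  p \in [pchar R] -> ~~ (p ^ e %| t)%N ->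
  \sum_(k < p ^ e) (-1) ^+ k * 'C(t, k)%:R = 0 :> R.
Proof.
move=> pcharRp; have p_pr := pcharf_prime pcharRp.
case: t => [|t] ndvd; first by rewrite dvdn0 in ndvd.
have pe_gt0 : (0 < p ^ e)%N by rewrite expn_gt0 prime_gt0.
rewrite -(prednK pe_gt0) sum_alternating_binomial.
have /eqP -> : 'C(t, (p ^ e).-1)%:R == 0 :> R.
  by rewrite -(dvdn_pcharf pcharRp) prime_dvdn_bin_pred.
by rewrite mulr0.
Qed.

Lemma unitmx_unipotent (R : comUnitRingType) k (M : 'M[R]_k) (P : pred 'I_k) :
  (forall i j, ~~ P i || P j -> M i j = (i == j)%:R) -> M \in unitmx.
Proof.
move=> M_id; set N := M - 1%:M.
have N_entry i j : N i j != 0 -> P i && ~~ P j.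
  by rewrite !mxE; apply: contraR; rewrite negb_and negbK => /M_id ->; rewrite subrr.
have NN : N *m N = 0.
  apply/matrixP => i j; rewrite !mxE big1 // => l _.
  have [-> | /N_entry/andP[_ nPl]] := eqVneq (N i l) 0; first by rewrite mul0r.
  have [-> | /N_entry/andP[Pl _]] := eqVneq (N l j) 0; first by rewrite mulr0.
  by rewrite Pl in nPl.
have -> : M = N + 1%:M by rewrite subrK.
clearbody N; have : (N + 1%:M) *m (1%:M - N) = 1%:M.
  by rewrite mulmxDl !mulmxBr NN !mulmx1 mul1mx subr0 addrC subrK.
by case/mulmx1_unit.
Qed.

Definition small_subsets (T : finType) (W : {set T}) q :=
  [set S : {set T} | (S \subset W) && (#|S| < q)%N].

Lemma sum_small_subsets (R : nmodType) (T : finType) (W : {set T}) q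
    (g : nat -> R) :
  \sum_(S in small_subsets W q) g #|S| = \sum_(k < q) g k *+ 'C(#|W|, k).
Proof.
transitivity (\sum_(S in small_subsets W q) \sum_(k < q | #|S| == k) g k).
  apply: eq_bigr => S; rewrite inE => /andP[_ ltSq].
  by rewrite (big_pred1 (Ordinal ltSq)) // => k; rewrite eq_sym.
rewrite (exchange_big_dep predT) //=; apply: eq_bigr => k _.
rewrite -cards_draws -sumr_const; apply: eq_bigl => S; rewrite !inE.
by case: eqP => [->|]; rewrite ?ltn_ord ?andbT ?andbF.
Qed.

Lemma card_small_subsets (T : finType) (W : {set T}) q :
  #|small_subsets W q| = (\sum_(k < q) 'C(#|W|, k))%N.
Proof.
rewrite -sum1_card (sum_small_subsets W q (fun=> 1%N)).
by apply: eq_bigr => k _; rewrite natn.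
Qed.

Section InclusionMatrices.

Variables (T : finType) (x : T) (p e : nat) (F : {set {set T}}).
Hypothesis p_prime : prime p.
Hypothesis F_skew : forall A B, A \in F -> B \in F -> A != B ->
  ~~ (p ^ e %| #|A :\: B|)%N.

Let pe_gt0 : (0 < p ^ e)%N. Proof. by rewrite expn_gt0 prime_gt0. Qed.

Let SS := small_subsets [set~ x] (p ^ e).
Let Aof (i : 'I_#|F|) : {set T} := enum_val i.
Let Sof (j : 'I_#|SS|) : {set T} := enum_val j.

Definition skew_incl_mx : 'M['F_p]_(#|F|, #|SS|) :=
  \matrix_(i, j) (if Sof j \subset Aof i :\ x
                  then (-1) ^+ #|Sof j| else 0).

Definition disj_incl_mx : 'M['F_p]_(#|SS|, #|F|) :=
  \matrix_(j, l) (Sof j \subset ~: Aof l)%:R.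

Lemma incl_mx_prodE i l :
  (skew_incl_mx *m disj_incl_mx) i l =
  \sum_(k < p ^ e) (-1) ^+ k * 'C(#|Aof i :\ x :\: Aof l|, k)%:R.
Proof.
under eq_bigr do rewrite mulr_natr.
rewrite -(sum_small_subsets (Aof i :\ x :\: Aof l)) mxE.
transitivity (\sum_(S in SS) (if S \subset Aof i :\ x then (-1) ^+ #|S| else 0 : 'F_p)
                               * (S \subset ~: Aof l)%:R).
  by rewrite [RHS]big_enum_val; apply: eq_bigr => j _; rewrite !mxE.
rewrite big_mkcond [RHS]big_mkcond; apply: eq_bigr => S _.
rewrite !inE (setDE (Aof i :\ x)) subsetI.
have [sub_Ax|] := boolP (S \subset Aof i :\ x); last by rewrite /= mul0r ?andbF if_same.
have [_|] := boolP (S \subset ~: Aof l); last by rewrite /= mulr0 ?andbF if_same.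
by rewrite mulr1 (subset_trans sub_Ax) // setDE subsetIr.
Qed.

Lemma incl_mx_prod_id i l : (x \notin Aof i) || (x \in Aof l) ->
  (skew_incl_mx *m disj_incl_mx) i l = (i == l)%:R.
Proof.
move=> x_harmless; rewrite incl_mx_prodE.
have [<-|neq_il] := eqVneq i l.
  rewrite setDDl setUC -setDDl setDv set0D cards0.
  rewrite -(prednK pe_gt0) big_ord_recl /= bin0 mulr1.
  by rewrite big1 ?addr0 // => k _; rewrite bin0n mulr0.
have -> : Aof i :\ x :\: Aof l = Aof i :\: Aof l.
  apply/setP => y; rewrite !inE; case: eqVneq => [->|] //=.
  by case/orP: x_harmless => [/negbTE -> | ->]; rewrite ?andbF.
apply: sum_alternating_binomial_pchar; first exact: pchar_Fp.
by apply: F_skew; rewrite ?enum_valP // (inj_eq enum_val_inj).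
Qed.

Lemma card_skew_family : (#|F| <= \sum_(k < p ^ e) 'C(#|T|.-1, k))%N.
Proof.
have : skew_incl_mx *m disj_incl_mx \in unitmx.
  exact: (unitmx_unipotent (P := fun i => x \in Aof i)) incl_mx_prod_id.
rewrite -row_free_unit => /eqP <-.
rewrite (leq_trans (mxrankM_maxl _ _)) // (leq_trans (rank_leq_col _)) //.
by rewrite card_small_subsets cardsC1.
Qed.

End InclusionMatrices.

Local Close Scope ring_scope.

Theorem mainTheorem2 (q n : nat) (F : {set {set 'I_n}}) :
  prime_power q ->
  (forall A B, A \in F -> B \in F -> A != B -> #|A :\: B| %% q != 0) ->
  #|F| <= \sum_(0 <= i < q) 'C(n.-1, i).
Proof.
move=> [p [e [p_pr [_ ->]]]] F_skew; rewrite big_mkord.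
case: n F F_skew => [|n] F F_skew.
  have pe_gt0 : 0 < p ^ e by rewrite expn_gt0 prime_gt0.
  rewrite -(prednK pe_gt0) big_ord_recl bin0.
  apply: leq_trans (leq_addr _ _).
  rewrite -(cards1 (set0 : {set 'I_0})); apply/subset_leq_card/subsetP => S _.
  by rewrite inE; apply/eqP/setP => -[].
by have := card_skew_family ord0 p_pr F_skew; rewrite card_ord.
Qed.
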